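(* Let $Q$ be a diassociative loop. Then the assignment $\sigma(L_x)=R_x$, $\sigma(L_x^{-1})=R_x^{-1}$, $\sigma(R_x)=M_x^{-1}$, $\sigma(R_x^{-1})=M_x$ (for $x\in Q$, where $M_x=R_xL_x$) defines a well-defined mapping $\sigma:\{L_x,R_x,L_x^{-1},R_x^{-1}:x\in Q\}\to\mathrm{Mlt}(Q)$ if and only if $x^3=1$ for every $x\in\mathrm{Com}(Q)$.
   Context: A loop is a magma with identity $1$ in which the left translations $L_x(y)=xy$ and right translations $R_x(y)=yx$ are bijections; it is diassociative if any two elements generate a subgroup. $\mathrm{Mlt}(Q)$ is the permutation group generated by all $L_x,R_x$. The commutant is $\mathrm{Com}(Q)=\{x\in Q: xy=yx\text{ for all }y\in Q\}$. Well-definedness means that whenever two of the permutations $L_x,R_x,L_x^{-1},R_x^{-1},L_y,\dots$ coincide, their prescribed images coincide. *)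

(* A loop on a carrier T, presented with its translation inverses:
   ldiv x = L_x^{-1}, rdiv x = R_x^{-1}.  The cancellation laws say exactly
   that L_x : y |-> x*y and R_x : y |-> y*x are bijections with these inverses. *)
Record loop (T : Type) := Loop {
  mul  : T -> T -> T;
  one  : T;
  ldiv : T -> T -> T;
  rdiv : T -> T -> T;   (* rdiv x y = y / x = R_x^{-1} y *)
  mul1l : forall x, mul one x = x;
  mul1r : forall x, mul x one = x;
  ldivK : forall x y, mul x (ldiv x y) = y;
  mulKl : forall x y, ldiv x (mul x y) = y;
  rdivK : forall x y, mul (rdiv x y) x = y;
  mulKr : forall x y, rdiv x (mul y x) = y
}.
Arguments mul {T} l _ _.
Arguments one {T} l.
Arguments ldiv {T} l _ _.
Arguments rdiv {T} l _ _.

Section LoopDefs.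
Context {T : Type} (Q : loop T).

Definition Lt (x : T) : T -> T := fun y => mul Q x y.
Definition Rt (x : T) : T -> T := fun y => mul Q y x.
Definition Lt_inv (x : T) : T -> T := fun y => ldiv Q x y.
Definition Rt_inv (x : T) : T -> T := fun y => rdiv Q x y.
Definition Mt (x : T) : T -> T := fun y => Rt x (Lt x y).
Definition Mt_inv (x : T) : T -> T := fun y => Lt_inv x (Rt_inv x y).

Definition subloop (P : T -> Prop) : Prop :=
  P (one Q) /\
  (forall a b, P a -> P b -> P (mul Q a b)) /\
  (forall a b, P a -> P b -> P (ldiv Q a b)) /\
  (forall a b, P a -> P b -> P (rdiv Q a b)).

Definition gen2 (x y : T) : T -> Prop :=
  fun z => forall P, subloop P -> P x -> P y -> P z.

(* diassociative: the subloop generated by any two elements is a group,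
   i.e. the multiplication is associative on it *)
Definition diassociative : Prop :=
  forall x y a b c, gen2 x y a -> gen2 x y b -> gen2 x y c ->
    mul Q (mul Q a b) c = mul Q a (mul Q b c).

Definition in_Com (x : T) : Prop := forall y, mul Q x y = mul Q y x.

Inductive gen_sym : Type :=
| SL : T -> gen_sym
| SLi : T -> gen_sym
| SR : T -> gen_sym
| SRi : T -> gen_sym.

Definition gen_perm (g : gen_sym) : T -> T :=
  match g with
  | SL x => Lt x
  | SLi x => Lt_inv x
  | SR x => Rt x
  | SRi x => Rt_inv x
  end.

Definition sigma_img (g : gen_sym) : T -> T :=
  match g with
  | SL x => Rt x
  | SLi x => Rt_inv x
  | SR x => Mt_inv x
  | SRi x => Mt x
  end.

Definition sigma_well_defined : Prop :=
  forall g h : gen_sym,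
    (forall z, gen_perm g z = gen_perm h z) ->
    (forall z, sigma_img g z = sigma_img h z).

End LoopDefs.

(* A generator L_a^{±1} or R_a^{±1} of a diassociative loop is itself a left
   or right translation (L_x^{-1} = L_{x^{-1}}, R_x^{-1} = R_{x^{-1}}), and
   sigma sends L_a to R_a and R_a to M_a^{-1}.  Evaluating at 1, two
   translations coincide only if they are equal or are L_a = R_a with a in
   Com(Q).  So sigma is well defined iff R_a = M_a^{-1}, i.e.
   z a = a^{-1} z a^{-1}, for every a in Com(Q); at z = 1 this is a^3 = 1,
   and conversely a^3 = 1 gives a^{-1} z a^{-1} = a^{-2} z = a z = z a
   since a commutes with z. *)

Section Loops.
Context {T : Type} (Q : loop T).
Local Notation "a * b" := (mul Q a b).
Local Notation e := (one Q).

Lemma lmul_inj a u v : a * u = a * v -> u = v.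
Proof. intro E. rewrite <- (mulKl _ Q a u), E. apply mulKl. Qed.

Lemma rmul_inj a u v : u * a = v * a -> u = v.
Proof. intro E. rewrite <- (mulKr _ Q a u), E. apply mulKr. Qed.

Lemma gen2_left x y : gen2 Q x y x.
Proof. intros P _ Px _. exact Px. Qed.

Lemma gen2_right x y : gen2 Q x y y.
Proof. intros P _ _ Py. exact Py. Qed.

Lemma gen2_one x y : gen2 Q x y e.
Proof. intros P [P1 _] _ _. exact P1. Qed.

Lemma gen2_mul x y a b : gen2 Q x y a -> gen2 Q x y b -> gen2 Q x y (a * b).
Proof.
  intros Ga Gb P SP Px Py. pose proof SP as (_ & Pmul & _).
  apply Pmul; [apply Ga | apply Gb]; assumption.
Qed.

Lemma gen2_ldiv x y a b :
  gen2 Q x y a -> gen2 Q x y b -> gen2 Q x y (ldiv Q a b).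
Proof.
  intros Ga Gb P SP Px Py. pose proof SP as (_ & _ & Pldiv & _).
  apply Pldiv; [apply Ga | apply Gb]; assumption.
Qed.

Lemma gen2_rdiv x y a b :
  gen2 Q x y a -> gen2 Q x y b -> gen2 Q x y (rdiv Q a b).
Proof.
  intros Ga Gb P SP Px Py. pose proof SP as (_ & _ & _ & Prdiv).
  apply Prdiv; [apply Ga | apply Gb]; assumption.
Qed.

Definition translation (t : bool * T) (z : T) : T :=
  let (left, a) := t in if left then a * z else z * a.

Definition sigma_translation (t : bool * T) : T -> T :=
  let (left, a) := t in if left then Rt Q a else Mt_inv Q a.

Lemma translation_eq_elt l a l' b :
  (forall z, translation (l, a) z = translation (l', b) z) -> a = b.
Proof.
  intro E. specialize (E e). simpl in E.
  destruct l, l'; rewrite ?mul1l, ?mul1r in E; exact E.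
Qed.

End Loops.

#[local] Hint Resolve gen2_left gen2_right gen2_one gen2_mul gen2_ldiv gen2_rdiv
  : gen2.

Section Diassociative.
Context {T : Type} (Q : loop T).
Hypothesis diassocQ : diassociative Q.
Local Notation "a * b" := (mul Q a b).
Local Notation e := (one Q).
Local Notation "a ^-1" := (ldiv Q a (one Q)) (at level 3, format "a ^-1").

Lemma mul2A x y a b c :
  gen2 Q x y a -> gen2 Q x y b -> gen2 Q x y c -> a * b * c = a * (b * c).
Proof. apply diassocQ. Qed.

Lemma mulrV a : a * a^-1 = e.
Proof. apply ldivK. Qed.

Lemma mulVr a : a^-1 * a = e.
Proof.
  apply (rmul_inj Q a^-1).
  rewrite (mul2A a a) by auto with gen2.
  rewrite mulrV, mul1l, mul1r. reflexivity.
Qed.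

Lemma ldivE a z : ldiv Q a z = a^-1 * z.
Proof.
  apply (lmul_inj Q a). rewrite ldivK.
  rewrite <- (mul2A a z) by auto with gen2.
  rewrite mulrV, mul1l. reflexivity.
Qed.

Lemma rdivE a z : rdiv Q a z = z * a^-1.
Proof.
  apply (rmul_inj Q a). rewrite rdivK.
  rewrite (mul2A a z) by auto with gen2.
  rewrite mulVr, mul1r. reflexivity.
Qed.

Lemma invK a : (a^-1)^-1 = a.
Proof. apply (lmul_inj Q a^-1). rewrite ldivK. symmetry. apply mulVr. Qed.

Lemma Mt_invE a z : Mt_inv Q a z = a^-1 * (z * a^-1).
Proof. unfold Mt_inv, Lt_inv, Rt_inv. rewrite ldivE, rdivE. reflexivity. Qed.

Definition gen_translation (g : gen_sym) : bool * T :=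
  match g with
  | SL x => (true, x)
  | SLi x => (true, x^-1)
  | SR x => (false, x)
  | SRi x => (false, x^-1)
  end.

Lemma gen_permE g z : gen_perm Q g z = translation Q (gen_translation g) z.
Proof.
  destruct g as [x | x | x | x]; simpl; unfold Lt, Rt, Lt_inv, Rt_inv;
    rewrite ?(ldivE x z), ?(rdivE x z); reflexivity.
Qed.

Lemma sigma_imgE g z :
  sigma_img Q g z = sigma_translation Q (gen_translation g) z.
Proof.
  destruct g as [x | x | x | x]; simpl; try reflexivity.
  - unfold Rt_inv, Rt. apply rdivE.
  - rewrite Mt_invE, invK. unfold Mt, Rt, Lt. apply (mul2A x z); auto with gen2.
Qed.

Lemma in_Com_ldiv_rdiv a z : in_Com Q a -> a^-1 * z = z * a^-1.
Proof.
  intro Ca. rewrite <- ldivE. apply (lmul_inj Q a). rewrite ldivK.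
  rewrite <- (mul2A a z) by auto with gen2.
  rewrite Ca, (mul2A a z) by auto with gen2.
  rewrite mulrV, mul1r. reflexivity.
Qed.

Lemma cube1_inv a : a * a * a = e -> a^-1 = a * a.
Proof. intro C. apply (rmul_inj Q a). rewrite C. apply mulVr. Qed.

Lemma cube1_Rt_Mt_inv a :
  in_Com Q a -> a * a * a = e -> forall z, Rt Q a z = Mt_inv Q a z.
Proof.
  intros Ca C z. unfold Rt. rewrite Mt_invE, <- in_Com_ldiv_rdiv by exact Ca.
  rewrite <- (mul2A a z) by auto with gen2.
  assert (Vsq : a^-1 * a^-1 = a).
  { transitivity (a^-1 * (a * a)). { f_equal. apply cube1_inv, C. }
    rewrite <- (mul2A a a), mulVr, mul1l by auto with gen2. reflexivity. }
  rewrite Vsq. symmetry. apply Ca.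
Qed.

Lemma Rt_Mt_inv_cube1 a : Rt Q a e = Mt_inv Q a e -> a * a * a = e.
Proof.
  unfold Rt. rewrite Mt_invE, !mul1l. intro E.
  assert (Sq : a * a = a^-1).
  { transitivity (a * (a^-1 * a^-1)). { f_equal. exact E. }
    rewrite <- (mul2A a a), mulrV, mul1l by auto with gen2. reflexivity. }
  rewrite Sq. apply mulVr.
Qed.

End Diassociative.

Theorem lemma6p1 (T : Type) (Q : loop T) :
  diassociative Q ->
  (sigma_well_defined Q <->
   (forall x : T, in_Com Q x -> mul Q (mul Q x x) x = one Q)).
Proof.
  intro diassocQ. split.
  - intros W x Cx. apply (Rt_Mt_inv_cube1 Q diassocQ).
    apply (W (SL x) (SR x)). intro z. apply Cx.
  - intros Cube g h E z. rewrite !(sigma_imgE Q diassocQ).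
    assert (Et : forall z, translation Q (gen_translation Q g) z
                         = translation Q (gen_translation Q h) z).
    { intro y. rewrite <- !(gen_permE Q diassocQ). apply E. }
    destruct (gen_translation Q g) as [[|] a], (gen_translation Q h) as [[|] b];
      pose proof (translation_eq_elt Q _ _ _ _ Et) as <-; simpl in Et |- *;
      try reflexivity.
    + exact (cube1_Rt_Mt_inv Q diassocQ a Et (Cube a Et) z).
    + assert (Ca : in_Com Q a) by (intro y; symmetry; apply Et).
      symmetry. exact (cube1_Rt_Mt_inv Q diassocQ a Ca (Cube a Ca) z).
Qed.
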